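(* Let $\Delta$ be a thick building of type $\mathsf{A}_n$ and let $\theta$ be a domestic collineation of $\Delta$. If there exists a simplex of type $\{i,n-i+1\}$ mapped to an opposite simplex by $\theta$, then there exists a simplex of type $\{j,n-j+1\mid 1\leq j\leq i\}$ mapped to an opposite simplex by $\theta$.
   Context: Types of $\mathsf{A}_n$ are $1,\ldots,n$ along the path Coxeter graph. A collineation is a type-preserving automorphism. Simplices $\alpha,\beta$ are opposite if every chamber containing either is opposite (at maximal gallery distance from) some chamber containing the other. $\theta$ is domestic if no chamber is mapped to an opposite chamber. *)

(* Buildings of type A_n as W-metric buildings
   (Abramenko--Brown, Def. 5.1) with Weyl group W = 'S_(n+1) and
   generators the adjacent transpositions s_1,...,s_n. *)
From mathcomp Require Import all_boot all_order all_fingroup.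
Set Implicit Arguments. Unset Strict Implicit. Unset Printing Implicit Defensive.
Local Open Scope group_scope.

Definition sgen (n k : nat) : 'S_n.+1 := tperm (inord k.-1) (inord k).

Definition is_gen (n k : nat) : bool := (1 <= k <= n)%N.

Definition word_len (n : nat) (w : 'S_n.+1) (m : nat) : Prop :=
  (exists ks : seq nat, size ks = m /\ all (is_gen n) ks /\
      \prod_(k <- ks) sgen n k = w) /\
  (forall ks : seq nat, all (is_gen n) ks -> \prod_(k <- ks) sgen n k = w ->
      (m <= size ks)%N).

Definition w0 (n : nat) : 'S_n.+1 := perm (@rev_ord_inj n.+1).

Definition is_building (n : nat) (C : Type) (delta : C -> C -> 'S_n.+1) : Prop :=
  inhabited C /\
  (forall x y, delta x y = 1 <-> x = y) /\
  (forall x y x' k, is_gen n k -> delta x' x = sgen n k ->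
      (delta x' y = sgen n k * delta x y \/ delta x' y = delta x y) /\
      (forall m, word_len (delta x y) m -> word_len (sgen n k * delta x y) m.+1 ->
          delta x' y = sgen n k * delta x y)) /\
  (forall x y k, is_gen n k -> exists x',
      delta x' x = sgen n k /\ delta x' y = sgen n k * delta x y).

(* thick: every panel contains at least three chambers *)
Definition thick (n : nat) (C : Type) (delta : C -> C -> 'S_n.+1) : Prop :=
  forall x k, is_gen n k -> exists y z,
    y <> z /\ delta x y = sgen n k /\ delta x z = sgen n k.

Definition opp_ch (n : nat) (C : Type) (delta : C -> C -> 'S_n.+1) (x y : C) :=
  delta x y = w0 n.

Definition Wpar (n : nat) (K : pred nat) : {group 'S_n.+1} :=
  <<[set sgen n k | k : 'I_n.+1 & (0 < (k : nat))%N && K k]>>%G.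

(* a simplex of type J (J a set of types in {1..n}) is the set of chambers
   containing it, i.e. a residue of type {1..n} \ J *)
Definition is_simplex (n : nat) (C : Type) (delta : C -> C -> 'S_n.+1)
    (J : pred nat) (A : C -> Prop) : Prop :=
  exists c, A c /\ forall d, A d <-> delta c d \in Wpar n (fun k => k \notin J).

Definition opp_simplex (n : nat) (C : Type) (delta : C -> C -> 'S_n.+1)
    (A B : C -> Prop) : Prop :=
  (forall x, A x -> exists y, B y /\ opp_ch delta x y) /\
  (forall y, B y -> exists x, A x /\ opp_ch delta y x).

(* type-preserving automorphism *)
Definition collineation (n : nat) (C : Type) (delta : C -> C -> 'S_n.+1)
    (theta : C -> C) : Prop :=
  bijective theta /\ forall x y, delta (theta x) (theta y) = delta x y.

Definition domestic (n : nat) (C : Type) (delta : C -> C -> 'S_n.+1)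
    (theta : C -> C) : Prop :=
  forall x, ~ opp_ch delta x (theta x).

Definition img (C : Type) (theta : C -> C) (A : C -> Prop) : C -> Prop :=
  fun y => exists x, A x /\ y = theta x.

Definition type_pair (n i : nat) : pred nat :=
  fun k => (k == i) || (k == n.+1 - i)%N.

Definition type_upto (n i : nat) : pred nat :=
  fun k => has (fun j => (k == j) || (k == n.+1 - j)%N) (iota 1 i).

(* Lengths in the Weyl group 'S_(n+1) are inversion numbers.  Let c be a chamber
   of A.  Since A is opposite θA, w0·δ(c,θc) lies in the parabolic subgroup of
   cotype {i, n+1-i}, which preserves the blocks [0,i), [i,n+1-i) and [n+1-i,n]
   of positions.  Thickness lets us move from c, inside its residue of type
   {1,...,i-1}, to a chamber b from which every s_k with k < i is a descent of
   both δ(b,θc) and δ(b,θ⁻¹c) (maximise the sum of the two lengths).  Together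
   with the block structure these descents force δ(b,θb)·w0 to fix the first and
   the last i positions, i.e. to lie in the parabolic subgroup of cotype
   {1..i, n+1-i..n}; hence the residue of b of that cotype is opposite its
   image. *)

From Pilot Require Import Defs.
From mathcomp Require Import all_boot all_order all_fingroup.
From mathcomp Require Import zify.
Set Implicit Arguments. Unset Strict Implicit. Unset Printing Implicit Defensive.

Local Notation Wpair n i := (Wpar n (fun k => k \notin type_pair n i)).
Local Notation Wlt n i := (Wpar n (gtn i)).
Local Notation Wupto n i := (Wpar n (fun k => k \notin type_upto n i)).

Section Coxeter.
Variable n : nat.
Local Open Scope group_scope.
Local Notation s := (sgen n).

Definition ninv (w : 'S_n.+1) : nat :=
  \sum_(pq : 'I_n.+1 * 'I_n.+1) ((pq.1 < pq.2)%N && (w pq.2 < w pq.1)%N).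

(* Permutations compose left to right, so [descent w k] says that [s k * w] is
   shorter than [w] (see [ninv_sgenM_desc]). *)
Definition descent (w : 'S_n.+1) (k : nat) : bool := (w (inord k) < w (inord k.-1))%N.

Definition wprod (ks : seq nat) : 'S_n.+1 := \prod_(k <- ks) s k.

Lemma mem_iota_gen k : (k \in iota 1 n) = is_gen n k.
Proof. by rewrite mem_iota /is_gen add1n ltnS. Qed.

Lemma sgen_ends k : is_gen n k ->
  ((inord k.-1 : 'I_n.+1) : nat) = k.-1 /\ ((inord k : 'I_n.+1) : nat) = k.
Proof. by case/andP=> k1 kn; split; rewrite inordK //; lia. Qed.

Lemma sgenK k : s k * s k = 1.
Proof. exact: tperm2. Qed.

Lemma sgenE k (p : 'I_n.+1) : is_gen n k ->
  (s k p : nat) = if p == k.-1 :> nat then k else if p == k :> nat then k.-1 else p.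
Proof.
move=> hk; have [ea eb] := sgen_ends hk.
rewrite /sgen; case: tpermP => [->|->|/eqP pa /eqP pb]; rewrite ?ea ?eb ?eqxx //.
  by case/andP: hk => k1 _; rewrite ifN //; lia.
by rewrite -!(inj_eq val_inj) /= ea eb in pa pb; rewrite (negbTE pa) (negbTE pb).
Qed.

Lemma sgen_fix k (p : 'I_n.+1) : is_gen n k -> (p != k.-1 :> nat) -> (p != k :> nat) ->
  s k p = p.
Proof. by move=> hk pa pb; apply: val_inj; rewrite /= sgenE // (negbTE pa) (negbTE pb). Qed.

Lemma sgen_ltE k m (p : 'I_n.+1) : is_gen n k -> k != m -> (s k p < m)%N = (p < m)%N.
Proof.
move=> hk km; rewrite sgenE //; case/andP: hk => k1 kn.
by case: (eqVneq (p : nat) k.-1) => e1; case: (eqVneq (p : nat) k) => e2 /=; lia.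
Qed.

Lemma sgen_ltE_pair k (pq : 'I_n.+1 * 'I_n.+1) : is_gen n k ->
  pq != (inord k.-1, inord k) -> pq != (inord k, inord k.-1) ->
  (s k pq.1 < s k pq.2)%N = (pq.1 < pq.2)%N.
Proof.
case: pq => p q hk; have [ea eb] := sgen_ends hk; case/andP: hk => k1 kn.
rewrite !xpair_eqE -!(inj_eq val_inj) /= ea eb !sgenE /is_gen ?k1 //.
by case: (eqVneq (p : nat) k.-1) => e1; case: (eqVneq (p : nat) k) => e2;
  case: (eqVneq (q : nat) k.-1) => e3; case: (eqVneq (q : nat) k) => e4 /=; lia.
Qed.

Lemma sgen_ends_neq k (w : 'S_n.+1) : is_gen n k ->
  (w (inord k.-1) : nat) != w (inord k).
Proof.
move=> hk; have [ea eb] := sgen_ends hk; rewrite (inj_eq val_inj) (inj_eq perm_inj).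
by rewrite -(inj_eq val_inj) /= ea eb; case/andP: hk; lia.
Qed.

(* Reindex the inversions of [s k * w] through [s k]: only the pair of positions
   [(k.-1, k)] changes status. *)
Lemma ninv_sgenM k (w : 'S_n.+1) : is_gen n k ->
  (ninv (s k * w) + descent w k = ninv w + (w (inord k.-1) < w (inord k)))%N.
Proof.
move=> hk; have [ea eb] := sgen_ends hk.
set a : 'I_n.+1 := inord k.-1; set b : 'I_n.+1 := inord k.
have ab : a != b by rewrite -(inj_eq val_inj) /= ea eb; case/andP: hk; lia.
have sinj : injective (fun pq : 'I_n.+1 * 'I_n.+1 => (s k pq.1, s k pq.2)).
  by move=> [p q] [p' q'] /= [] /perm_inj -> /perm_inj ->.
rewrite /ninv (reindex_inj sinj) /=.
have sK x : s k (s k x) = x by rewrite /sgen tpermK.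
have sa : s k a = b by rewrite /sgen tpermL.
have sb : s k b = a by rewrite /sgen tpermR.
under eq_bigr do rewrite !permM !sK.
rewrite (bigD1 (a, b)) //= (bigD1 (b, a)) /=; last by rewrite xpair_eqE (negbTE ab) andbF.
rewrite [in RHS](bigD1 (a, b)) //= [in RHS](bigD1 (b, a)) /=;
  last by rewrite xpair_eqE (negbTE ab) andbF.
under eq_bigr => pq /andP [nab nba] do rewrite sgen_ltE_pair //.
rewrite sa sb ea eb /descent -/a -/b; case/andP: hk => k1 kn.
have -> : (k < k.-1)%N = false by lia.
have -> : (k.-1 < k)%N = true by lia.
rewrite /=; set S := \sum_(_ | _) _; move: (w a < w b) (w b < w a) => x y; lia.
Qed.

Lemma ninv_sgenM_desc k (w : 'S_n.+1) : is_gen n k -> descent w k ->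
  (ninv (s k * w)).+1 = ninv w.
Proof.
move=> hk hd; have := ninv_sgenM w hk; rewrite hd.
by move: hd; rewrite /descent; lia.
Qed.

Lemma ninv_sgenM_asc k (w : 'S_n.+1) : is_gen n k -> ~~ descent w k ->
  ninv (s k * w) = (ninv w).+1.
Proof.
move=> hk hd; have := ninv_sgenM w hk; have := sgen_ends_neq w hk.
by rewrite (negbTE hd); move: hd; rewrite /descent; lia.
Qed.

Lemma descent_sgenM k (w : 'S_n.+1) : is_gen n k -> descent (s k * w) k = ~~ descent w k.
Proof.
move=> hk; have [ea eb] := sgen_ends hk; have := sgen_ends_neq w hk.
have sa : s k (inord k.-1) = inord k by rewrite /sgen tpermL.
have sb : s k (inord k) = inord k.-1 by rewrite /sgen tpermR.
by rewrite /descent !permM sa sb; lia.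
Qed.

Lemma ninv_sgenM_le k (w : 'S_n.+1) : is_gen n k -> (ninv (s k * w) <= (ninv w).+1)%N.
Proof.
move=> hk; case: (boolP (descent w k)) => hd; last by rewrite (ninv_sgenM_asc hk hd).
by rewrite -(ninv_sgenM_desc hk hd) ltnW.
Qed.

Lemma incr_endo_id (f : nat -> nat) lo hi :
  (forall p, (lo <= p <= hi)%N -> (lo <= f p <= hi)%N) ->
  (forall p, (lo < p <= hi)%N -> (f p.-1 < f p)%N) ->
  forall p, (lo <= p <= hi)%N -> f p = p.
Proof.
move=> endo incr.
have ge d : (lo + d <= hi)%N -> (lo + d <= f (lo + d))%N.
  elim: d => [|d IH] h; first by have := endo (lo + 0); lia.
  by have := incr (lo + d.+1); have := IH ltac:(lia); rewrite addnS /=; lia.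
have le d : (lo + d <= hi)%N -> (f (hi - d) <= hi - d)%N.
  elim: d => [|d IH] h; first by have := endo (hi - 0); lia.
  have := incr (hi - d); have := IH ltac:(lia).
  have -> : (hi - d).-1 = hi - d.+1 by lia.
  lia.
move=> p hp; have := ge (p - lo) ltac:(lia); have := le (hi - p) ltac:(lia).
by rewrite subKn ?subnKC; lia.
Qed.

Lemma perm_fix_block (w : 'S_n.+1) lo hi : (hi <= n)%N ->
  (forall p : 'I_n.+1, (lo <= p <= hi)%N -> (lo <= w p <= hi)%N) ->
  (forall k, (lo < k <= hi)%N -> ~~ descent w k) ->
  forall p : 'I_n.+1, (lo <= p <= hi)%N -> w p = p.
Proof.
move=> hin endo asc p hp; apply: val_inj => /=.
have := @incr_endo_id (fun q => w (inord q)) lo hi _ _ p hp; rewrite inord_val; apply.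
  by move=> q hq; have := endo (inord q); rewrite inordK //; lia.
move=> k hk; have gk : is_gen n k by rewrite /is_gen; lia.
by have := asc k hk; have := sgen_ends_neq w gk; rewrite /descent; lia.
Qed.

Lemma exists_descent (w : 'S_n.+1) : w != 1 -> exists2 k, is_gen n k & descent w k.
Proof.
move=> w1; case: (boolP (has (descent w) (iota 1 n))).
  by case/hasP=> k; rewrite mem_iota_gen; exists k.
move/hasPn=> asc; case/eqP: w1; apply/permP => p; rewrite perm1.
apply: (perm_fix_block (lo := 0) (hi := n)) => //.
- by move=> q _; have := ltn_ord (w q); lia.
- by move=> k hk; apply: asc; rewrite mem_iota_gen /is_gen; lia.
- by have := ltn_ord p; lia.
Qed.

Lemma ninv1 : ninv 1 = 0.
Proof. by rewrite /ninv big1 // => pq _; rewrite !perm1; case: ltngtP. Qed.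

Lemma ninv_eq0 (w : 'S_n.+1) : ninv w = 0 -> w = 1.
Proof.
move=> h0; apply/eqP; apply: contraLR isT => /exists_descent [k hk hd].
by have := ninv_sgenM_desc hk hd; rewrite h0.
Qed.

Lemma descent_ind (P : 'S_n.+1 -> Prop) : P 1 ->
  (forall w k, is_gen n k -> descent w k -> P (s k * w) -> P w) -> forall w, P w.
Proof.
move=> P1 Pstep w; move: {2}(ninv w) (erefl (ninv w)) => m.
elim: m w => [|m IH] w hm; first by rewrite (ninv_eq0 hm).
have [|k hk hd] := exists_descent (w := w).
  by apply: contra_eqN hm => /eqP ->; rewrite ninv1.
by apply: (Pstep w k hk hd); apply: IH; have := ninv_sgenM_desc hk hd; rewrite hm => -[].
Qed.

Lemma wprod_cons k ks : wprod (k :: ks) = s k * wprod ks.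
Proof. by rewrite /wprod big_cons. Qed.

Lemma wprod_rcons ks k : wprod (rcons ks k) = wprod ks * s k.
Proof. by rewrite /wprod big_rcons. Qed.

Lemma wprod_rev ks : wprod (rev ks) = (wprod ks)^-1.
Proof.
elim: ks => [|k ks IH]; first by rewrite /wprod big_nil invg1.
by rewrite rev_cons wprod_rcons IH wprod_cons invMg tpermV.
Qed.

Lemma reduced_word (w : 'S_n.+1) :
  exists ks, [/\ all (is_gen n) ks, size ks = ninv w & wprod ks = w].
Proof.
elim/descent_ind: w => [|w k hk hd [ks [gks sks eks]]].
  by exists [::]; rewrite ninv1 /wprod big_nil.
exists (k :: ks); rewrite /= hk gks sks (ninv_sgenM_desc hk hd).
by rewrite wprod_cons eks mulgA sgenK mul1g.
Qed.

Lemma ninv_wprod_le ks : all (is_gen n) ks -> (ninv (wprod ks) <= size ks)%N.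
Proof.
elim: ks => [|k ks IH] /=; first by rewrite /wprod big_nil ninv1.
by case/andP=> hk /IH h; rewrite wprod_cons; have := ninv_sgenM_le (wprod ks) hk; lia.
Qed.

Lemma word_len_ninv (w : 'S_n.+1) : word_len w (ninv w).
Proof.
split; first by have [ks [gks sks eks]] := reduced_word w; exists ks.
by move=> ks gks <-; apply: ninv_wprod_le.
Qed.

Lemma ninvV (w : 'S_n.+1) : ninv w^-1 = ninv w.
Proof.
suff le v : (ninv v^-1 <= ninv v)%N by apply/eqP; rewrite eqn_leq le -{1}[w]invgK le.
have [ks [gks <- <-]] := reduced_word v.
by rewrite -wprod_rev -size_rev ninv_wprod_le // all_rev.
Qed.

Lemma ninv_bound (w : 'S_n.+1) : (ninv w <= n.+1 * n.+1)%N.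
Proof.
have <- : #|{: 'I_n.+1 * 'I_n.+1}| = (n.+1 * n.+1)%N by rewrite card_prod card_ord.
by rewrite -sum1_card; apply: leq_sum => pq _; case: (_ && _).
Qed.

End Coxeter.

Section Parabolic.
Variable n : nat.
Local Open Scope group_scope.
Local Notation s := (sgen n).
Local Notation w0 := (w0 n).

Lemma sgen_Wpar (K : pred nat) k : is_gen n k -> K k -> s k \in Wpar n K.
Proof.
move=> hk hK; apply/mem_gen/imsetP.
have kn : (k < n.+1)%N by case/andP: hk.
by exists (Ordinal kn); rewrite // inE /=; case/andP: hk => -> _.
Qed.

Lemma Wpar_min (K : pred nat) (G : {group 'S_n.+1}) :
  (forall k, is_gen n k -> K k -> s k \in G) -> Wpar n K \subset G.
Proof.
move=> sG; rewrite gen_subG; apply/subsetP => _ /imsetP [k + ->].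
by rewrite inE => /andP [k0 hK]; apply: sG; rewrite // /is_gen k0 -ltnS ltn_ord.
Qed.

Lemma Wpar_mono (K1 K2 : pred nat) :
  (forall k, is_gen n k -> K1 k -> K2 k) -> Wpar n K1 \subset Wpar n K2.
Proof. by move=> sK; apply: Wpar_min => k hk /(sK k hk); apply: sgen_Wpar. Qed.

Lemma Wpar_wprod (K : pred nat) w : w \in Wpar n K ->
  exists2 ks, all (fun k => is_gen n k && K k) ks & w = wprod n ks.
Proof.
case/gen_prodgP => m [c cK ->]; elim: m c cK => [|m IH] c cK.
  by exists [::]; rewrite // big_ord0 /wprod big_nil.
have [ks gks eks] := IH (fun j => c (lift ord0 j)) (fun j => cK _).
case/imsetP: (cK ord0) => k; rewrite inE => /andP [k0 hK] ek.
exists (nat_of_ord k :: ks); last by rewrite big_ord_recl wprod_cons -eks ek.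
by rewrite /= gks hK /is_gen k0 -ltnS ltn_ord.
Qed.

Lemma Wpar_stable (K : pred nat) (P : pred 'I_n.+1) w :
  (forall k p, is_gen n k -> K k -> P p -> P (s k p)) ->
  w \in Wpar n K -> forall p, P p -> P (w p).
Proof.
move=> sP /Wpar_wprod [ks + ->]; elim: ks => [|k ks IH] /=.
  by move=> _ p; rewrite /wprod big_nil perm1.
by case/andP=> /andP [hk hK] /IH wP p Pp; rewrite wprod_cons permM; apply/wP/sP.
Qed.

Lemma Wpar_fix (K : pred nat) (q : 'I_n.+1) w :
  (forall k, is_gen n k -> K k -> s k q = q) -> w \in Wpar n K -> w q = q.
Proof.
move=> sq wK; apply/eqP; apply: (Wpar_stable (P := pred1 q) _ wK) => //=.
by move=> k p hk hK /eqP ->; rewrite sq.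
Qed.

Definition opp_stable (K : pred nat) : Prop :=
  forall k, is_gen n k -> K k -> K (n.+1 - k).

Lemma w0E (p : 'I_n.+1) : w0 p = rev_ord p.
Proof. by rewrite /Defs.w0 permE. Qed.

Lemma w0K : w0 * w0 = 1.
Proof. by apply/permP => p; rewrite permM !w0E rev_ordK perm1. Qed.

Lemma w0V : w0^-1 = w0.
Proof. by apply/eqP; rewrite eq_invg_mul w0K. Qed.

Lemma mulgw0K (x : 'S_n.+1) : x * w0 * w0 = x.
Proof. by rewrite -mulgA w0K mulg1. Qed.

Lemma conjg_w0 (w : 'S_n.+1) : w ^ w0 = w0 * w * w0.
Proof. by rewrite conjgE w0V mulgA. Qed.

Lemma sgen_conj_w0 k : is_gen n k -> s k ^ w0 = s (n.+1 - k).
Proof.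
case/andP=> k1 kn; rewrite /sgen tpermJ tpermC !w0E.
by congr tperm; apply: val_inj; rewrite /= !inordK; lia.
Qed.

Lemma Wpar_conj_w0 (K : pred nat) w :
  opp_stable K -> w \in Wpar n K -> w ^ w0 \in Wpar n K.
Proof.
have memJ x : (x \in Wpar n K :^ w0^-1) = (x ^ w0 \in Wpar n K).
  by rewrite -{1}(conjgK w0 x) memJ_conjg.
move=> Ksym wK; rewrite -memJ; apply: subsetP wK; apply: Wpar_min => k hk hK.
rewrite memJ sgen_conj_w0 // sgen_Wpar //; last exact: Ksym.
by case/andP: hk => k1 kn; rewrite /is_gen; lia.
Qed.

Lemma descent_mulw0 w k : is_gen n k -> descent (w * w0) k = ~~ descent w k.
Proof.
move=> hk; have := sgen_ends_neq w hk; rewrite /descent !permM !w0E /=.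
by have := ltn_ord (w (inord k)); have := ltn_ord (w (inord k.-1)); lia.
Qed.

Lemma descent_w0mul w k : is_gen n k -> descent (w0 * w) k = ~~ descent w (n.+1 - k).
Proof.
move=> hk; have hk' : is_gen n (n.+1 - k) by case/andP: hk => k1 kn; rewrite /is_gen; lia.
have [ea eb] := sgen_ends hk; have [ea' eb'] := sgen_ends hk'.
have w0a : w0 (inord k.-1) = inord (n.+1 - k).
  by apply: val_inj; rewrite w0E /= ea eb'; case/andP: hk; lia.
have w0b : w0 (inord k) = inord (n.+1 - k).-1.
  by apply: val_inj; rewrite w0E /= eb ea'; case/andP: hk; lia.
have := sgen_ends_neq w hk'; rewrite /descent !permM w0a w0b; lia.
Qed.

Lemma descent_fix_outside lo hi (t : 'S_n.+1) k :
  (forall p : 'I_n.+1, (p < lo)%N || (hi < p)%N -> t p = p) ->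
  is_gen n k -> descent t k -> (lo < k <= hi)%N.
Proof.
move=> fixt hk; have [ea eb] := sgen_ends hk; have [k1 kn] := andP hk.
have stays (q : 'I_n.+1) : ~~ ((q < lo) || (hi < q))%N -> ~~ ((t q < lo) || (hi < t q))%N.
  by apply: contra => out; move/perm_inj: (fixt _ out) => tq; rewrite -tq.
rewrite /descent; set a : 'I_n.+1 := inord k.-1 in ea *; set b : 'I_n.+1 := inord k in eb *.
have [aout|ain] := boolP ((a < lo) || (hi < a))%N;
have [bout|bin] := boolP ((b < lo) || (hi < b))%N.
- by rewrite (fixt _ aout) (fixt _ bout); lia.
- by have := stays _ bin; rewrite (fixt _ aout); lia.
- by have := stays _ ain; rewrite (fixt _ bout); lia.
- lia.
Qed.

Lemma Wpar_of_fix_outside lo hi (t : 'S_n.+1) :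
  (forall p : 'I_n.+1, (p < lo)%N || (hi < p)%N -> t p = p) ->
  t \in Wpar n (fun k => (lo < k <= hi)%N).
Proof.
elim/descent_ind: t => [|t k hk hd IH] fixt; first exact: group1.
have /andP [lok khi] := descent_fix_outside fixt hk hd.
have -> : t = s k * (s k * t) by rewrite mulgA sgenK mul1g.
rewrite groupM ?sgen_Wpar ?lok // IH // => p out; rewrite permM sgen_fix ?fixt //; lia.
Qed.

End Parabolic.

Section Building.
Variables (n : nat) (C : Type) (delta : C -> C -> 'S_n.+1).
Hypothesis Hb : is_building delta.
Local Open Scope group_scope.
Local Notation s := (sgen n).

Lemma delta_eq1 x y : delta x y = 1 <-> x = y.
Proof. by case: Hb => _ []. Qed.

Lemma delta_refl x : delta x x = 1.
Proof. exact/delta_eq1. Qed.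

Lemma delta_adj x y x' k : is_gen n k -> delta x' x = s k ->
  delta x' y = s k * delta x y \/ delta x' y = delta x y.
Proof. by case: Hb => _ [_ [wd2 _]] hk /(wd2 x y x' k hk) []. Qed.

Lemma delta_adj_asc x y x' k : is_gen n k -> delta x' x = s k ->
  ~~ descent (delta x y) k -> delta x' y = s k * delta x y.
Proof.
case: Hb => _ [_ [wd2 _]] hk /(wd2 x y x' k hk) [_ up] hasc.
by apply: (up _ (word_len_ninv _)); rewrite -(ninv_sgenM_asc hk hasc); apply: word_len_ninv.
Qed.

Lemma exists_adj x y k : is_gen n k ->
  exists x', delta x' x = s k /\ delta x' y = s k * delta x y.
Proof. by case: Hb => _ [_ [_ wd3]]; apply: wd3. Qed.

Lemma delta_adj_sym x y k : is_gen n k -> delta x y = s k -> delta y x = s k.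
Proof.
move=> hk e; have [z [zx zy]] := exists_adj x y hk.
by rewrite e sgenK in zy; move/delta_eq1: zy => <-.
Qed.

Fixpoint gallery (ks : seq nat) (x y : C) : Prop :=
  if ks is k :: ks' then exists2 z, delta x z = s k & gallery ks' z y else x = y.

Lemma gallery_rcons ks k x y z :
  gallery ks x y -> delta y z = s k -> gallery (rcons ks k) x z.
Proof.
elim: ks x => [|k' ks IH] x /=; first by move=> -> yz; exists z.
by case=> u xu uy yz; exists u => //; apply: IH.
Qed.

Lemma gallery_rev ks x y : all (is_gen n) ks -> gallery ks x y -> gallery (rev ks) y x.
Proof.
elim: ks x => [|k ks IH] x /=; first by move=> _ ->.
case/andP=> hk gks [z xz zy]; rewrite rev_cons.
by apply: (gallery_rcons (IH _ gks zy)); apply: delta_adj_sym.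
Qed.

Lemma gallery_delta ks x y : all (is_gen n) ks -> ninv (wprod n ks) = size ks ->
  gallery ks x y -> delta x y = wprod n ks.
Proof.
elim: ks x => [|k ks IH] x /=; first by move=> _ _ ->; rewrite delta_refl /wprod big_nil.
case/andP=> hk gks; rewrite wprod_cons => red [z xz zy].
have le := ninv_wprod_le gks; have le' := ninv_sgenM_le (wprod n ks) hk.
have red' : ninv (wprod n ks) = size ks by lia.
have zyE := IH z gks red' zy.
rewrite -zyE; apply: (delta_adj_asc hk xz); rewrite zyE; apply/negP => hd.
by have := ninv_sgenM_desc hk hd; lia.
Qed.

Lemma exists_gallery x y : exists ks, [/\ all (is_gen n) ks, wprod n ks = delta x y,
  size ks = ninv (delta x y) & gallery ks x y].
Proof.
suff gal w z : delta z y = w -> exists ks, [/\ all (is_gen n) ks, wprod n ks = w,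
  size ks = ninv w & gallery ks z y] by apply: gal.
elim/descent_ind: w z => [|w k hk hd IH] z zy.
  by exists [::]; rewrite ninv1 /wprod big_nil; split => //; apply/delta_eq1.
have [z' [z'z]] := exists_adj z y hk; rewrite zy => /IH [ks [gks eks sks gal]].
exists (k :: ks); split => /=; first by rewrite hk.
- by rewrite wprod_cons eks mulgA sgenK mul1g.
- by rewrite sks (ninv_sgenM_desc hk hd).
- by exists z'; rewrite // (delta_adj_sym hk z'z).
Qed.

Lemma deltaV x y : delta y x = (delta x y)^-1.
Proof.
have [ks [gks eks sks gal]] := exists_gallery x y.
rewrite (gallery_delta _ _ (gallery_rev gks gal)) ?all_rev ?wprod_rev ?eks //.
by rewrite size_rev ninvV.
Qed.

Lemma residue_adj (K : pred nat) x x' c k : is_gen n k -> K k -> delta x' x = s k ->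
  delta x c \in Wpar n K -> delta x' c \in Wpar n K.
Proof.
move=> hk hK x'x xc; have [->|->] := delta_adj c hk x'x => //.
by rewrite groupM ?sgen_Wpar.
Qed.

Lemma reach (K : pred nat) u x y : u \in Wpar n K ->
  exists x', delta x' y = u * delta x y /\
             forall z, delta x' z * (delta x z)^-1 \in Wpar n K.
Proof.
case/Wpar_wprod=> ks + ->; elim: ks => [|k ks IH] /=.
  by move=> _; exists x; rewrite /wprod big_nil mul1g; split=> // z; rewrite mulgV group1.
case/andP=> /andP [hk hK] /IH [x'' [x''y x''K]].
have [x' [x'x'' x'y]] := exists_adj x'' y hk.
exists x'; split => [|z]; first by rewrite x'y x''y wprod_cons mulgA.
by have [->|->] := delta_adj z hk x'x''; rewrite // -mulgA groupM // sgen_Wpar.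
Qed.

Lemma residue_deltaL (K : pred nat) x x' y : delta x' x \in Wpar n K ->
  delta x' y * (delta x y)^-1 \in Wpar n K.
Proof.
(* Reaching from [x] towards [x'] with [u = δ(x,x')^-1] lands on [x'] itself. *)
rewrite deltaV => uK; have [z [zx' zK]] := reach x x' uK.
by rewrite mulVg in zx'; move/delta_eq1: zx' => <-.
Qed.

Lemma residue_deltaR (K : pred nat) x y y' : delta y y' \in Wpar n K ->
  (delta x y)^-1 * delta x y' \in Wpar n K.
Proof.
move=> yy'; have y'y : delta y' y \in Wpar n K by rewrite deltaV groupV.
have := residue_deltaL x y'y.
by rewrite (deltaV x y') (deltaV x y) invgK -groupV invMg invgK.
Qed.

Lemma opp_in_residue (K : pred nat) b b' x :
  opp_stable n K ->
  delta b b' * w0 n \in Wpar n K -> delta b x \in Wpar n K ->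
  exists y, delta b' y \in Wpar n K /\ delta x y = w0 n.
Proof.
move=> Ksym bb' bx; set d := delta x b'.
have dK : d * w0 n \in Wpar n K.
  have xb : delta x b \in Wpar n K by rewrite deltaV groupV.
  rewrite -(mulgKV (delta b b') d) -mulgA; apply: groupM bb'.
  exact: residue_deltaL.
have uK : (d^-1 * w0 n)^-1 \in Wpar n K.
  have -> : (d^-1 * w0 n)^-1 = (d * w0 n) ^ w0 n.
    by rewrite invMg invgK w0V conjg_w0 mulgA mulgw0K.
  exact: Wpar_conj_w0.
have [y [yx yK]] := reach b' x uK.
exists y; split; first by have := yK b'; rewrite delta_refl invg1 mulg1 deltaV groupV.
by rewrite deltaV yx invMg invgK -deltaV mulgA mulgV mul1g.
Qed.

Lemma opp_residues (K : pred nat) b b' :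
  opp_stable n K ->
  delta b b' * w0 n \in Wpar n K ->
  opp_simplex delta (fun x => delta b x \in Wpar n K) (fun y => delta b' y \in Wpar n K).
Proof.
move=> Ksym bb'; split => x; first exact: opp_in_residue.
apply: opp_in_residue => //.
have -> : delta b' b * w0 n = ((delta b b' * w0 n) ^ w0 n)^-1.
  by rewrite conjg_w0 mulgA mulgw0K invMg w0V deltaV.
by rewrite groupV Wpar_conj_w0.
Qed.

End Building.

Lemma img_residue n (C : Type) (delta : C -> C -> 'S_n.+1) (theta : C -> C)
    (K : pred nat) b y : collineation delta theta ->
  img theta (fun x => delta b x \in Wpar n K) y <-> delta (theta b) y \in Wpar n K.
Proof.
case=> [[th' thK th'K] dth]; split => [[x [bx ->]]|yb]; first by rewrite dth.
by exists (th' y); rewrite -dth th'K.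
Qed.

Lemma opp_simplex_eqR n (C : Type) (delta : C -> C -> 'S_n.+1) (A B B' : C -> Prop) :
  (forall y, B y <-> B' y) -> opp_simplex delta A B' -> opp_simplex delta A B.
Proof.
move=> BB' [AB' B'A]; split => [x /AB' [y [By xy]]|y /BB' /B'A //].
by exists y; rewrite BB'.
Qed.

Lemma bounded_climb (T : Type) (P good : T -> Prop) (f : T -> nat) (B : nat) :
  (forall x, P x -> (f x <= B)%N) ->
  (forall x, P x -> good x \/ exists2 x', P x' & (f x < f x')%N) ->
  forall x, P x -> exists2 x, P x & good x.
Proof.
move=> fB climb x; move: {2}(B - f x)%N (leqnn (B - f x)) => m.
elim: m x => [|m IH] x hm Px; case: (climb x Px) => [gx|[x' Px' fx']];
  try by exists x.
  by have := fB x' Px'; lia.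
by apply: (IH x') => //; have := fB x' Px'; lia.
Qed.

Section Projection.
Variables (n : nat) (C : Type) (delta : C -> C -> 'S_n.+1).
Hypotheses (Hb : is_building delta) (Ht : thick delta).
Local Open Scope group_scope.
Local Notation s := (sgen n).

Lemma panel_climb x y1 y2 k : is_gen n k -> ~~ descent (delta x y1) k ->
  exists x', [/\ delta x' x = s k, ninv (delta x' y1) = (ninv (delta x y1)).+1
              & (ninv (delta x y2) <= ninv (delta x' y2))%N].
Proof.
(* Thickness gives two chambers [y <> z] in the k-panel of [x]; at most one of
   them is closer to [y2] than [x] is. *)
move=> hk asc1; have [y [z [yz [xy xz]]]] := Ht x hk.
have yx := delta_adj_sym Hb hk xy; have zx := delta_adj_sym Hb hk xz.
have up v : delta v x = s k -> ninv (delta v y1) = (ninv (delta x y1)).+1.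
  by move=> vx; rewrite (delta_adj_asc Hb hk vx asc1) ninv_sgenM_asc.
have [desc2|asc2] := boolP (descent (delta x y2) k); last first.
  by exists y; rewrite (delta_adj_asc Hb hk yx asc2) ninv_sgenM_asc // up.
have [yy2|yy2] := delta_adj Hb y2 hk yx; last by exists y; rewrite yy2 up.
exists z; split => //; first exact: up.
have zy : delta z y = s k.
  case: (delta_adj Hb y hk zx); rewrite xy // sgenK => /(delta_eq1 Hb) zy.
  by exfalso; apply: yz; rewrite zy.
rewrite (delta_adj_asc Hb hk zy); first by rewrite yy2 mulgA sgenK mul1g.
by rewrite yy2 descent_sgenM // desc2.
Qed.

Lemma exists_descents_in_residue (L : pred nat) c y1 y2 :
  exists2 b, delta b c \in Wpar n L &
    forall k, is_gen n k -> L k -> descent (delta b y1) k && descent (delta b y2) k.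
Proof.
pose f x := (ninv (delta x y1) + ninv (delta x y2))%N.
have fB x : (f x <= (n.+1 * n.+1).*2)%N by rewrite /f -addnn leq_add ?ninv_bound.
have cc : delta c c \in Wpar n L by rewrite (delta_refl Hb) group1.
apply: (@bounded_climb _ (fun x => delta x c \in Wpar n L) _ f _ (fun x _ => fB x) _ c cc).
move=> x xc.
pose good k := L k ==> descent (delta x y1) k && descent (delta x y2) k.
have [/allP allg|/allPn [k]] := boolP (all good (iota 1 n)).
  by left => k hk Lk; have := allg k; rewrite mem_iota_gen /good Lk => /(_ hk).
rewrite mem_iota_gen /good => hk; rewrite negb_imply negb_and => /andP [Lk /orP [] asc].
- have [x' [x'x up le]] := panel_climb y2 hk asc.
  by right; exists x'; [exact: residue_adj x'x xc | rewrite /f; lia].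
- have [x' [x'x up le]] := panel_climb y1 hk asc.
  by right; exists x'; [exact: residue_adj x'x xc | rewrite /f; lia].
Qed.

End Projection.

Section TypeSets.
Variables n i : nat.
Local Open Scope group_scope.
Local Notation s := (sgen n).

Lemma mem_type_upto k : is_gen n k -> (k \in type_upto n i) = (k <= i)%N || (n.+1 - i <= k)%N.
Proof.
case/andP=> k1 kn; rewrite unfold_in; apply/hasP/idP => [[j]|/orP [le|ge]].
- by rewrite mem_iota => /andP [j1 j2] /orP [] /eqP ->; apply/orP; lia.
- by exists k; rewrite ?mem_iota ?eqxx //; lia.
- exists (n.+1 - k); first by rewrite mem_iota; lia.
  by apply/orP; right; apply/eqP; lia.
Qed.

Lemma opp_stable_type_pair : opp_stable n (fun k => k \notin type_pair n i).
Proof.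
move=> k /andP [k1 kn] /=; rewrite !unfold_in /type_pair => /norP [/eqP ki /eqP kj].
by apply/norP; split; apply/eqP; lia.
Qed.

Lemma opp_stable_type_upto : opp_stable n (fun k => k \notin type_upto n i).
Proof.
move=> k hk /=; have k' : is_gen n (n.+1 - k) by case/andP: hk => k1 kn; rewrite /is_gen; lia.
rewrite (mem_type_upto hk) (mem_type_upto k') => /norP [a b].
by case/andP: hk => k1 kn; apply/norP; split; lia.
Qed.

Lemma Wpair_stable_lt w (p : 'I_n.+1) : w \in Wpair n i -> (p < i)%N -> (w p < i)%N.
Proof.
move=> wK; apply: (Wpar_stable (P := fun q : 'I_n.+1 => (q < i)%N) _ wK) => k q hk /=.
by rewrite unfold_in => /norP [ki _]; rewrite sgen_ltE.
Qed.

Lemma Wpair_stable_ge w (p : 'I_n.+1) : w \in Wpair n i -> (n.+1 - i <= p)%N -> (n.+1 - i <= w p)%N.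
Proof.
move=> wK; apply: (Wpar_stable (P := fun q : 'I_n.+1 => (n.+1 - i <= q)%N) _ wK) => k q hk /=.
by rewrite unfold_in => /norP [_ ki] qi; rewrite leqNgt sgen_ltE // -leqNgt.
Qed.

Lemma Wlt_fix w (p : 'I_n.+1) : w \in Wlt n i -> (i <= p)%N -> w p = p.
Proof.
move=> wL ip; apply: (Wpar_fix _ wL) => k hk /= ki.
by apply: sgen_fix => //; case/andP: hk; lia.
Qed.

Lemma Wupto_of_fix (t : 'S_n.+1) :
  (forall p : 'I_n.+1, (p < i)%N || (n - i < p)%N -> t p = p) -> t \in Wupto n i.
Proof.
move/Wpar_of_fix_outside; apply/subsetP/Wpar_mono => k hk /= /andP [ik kn].
by rewrite (mem_type_upto hk); apply/norP; split; lia.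
Qed.

End TypeSets.

Section Blocks.
Variables n i : nat.
Hypotheses (i_gt0 : (0 < i)%N) (i_half : (2 * i <= n.+1)%N).
Local Open Scope group_scope.
Local Notation w0 := (w0 n).

Lemma Wlt_sub_Wpair : Wlt n i \subset Wpair n i.
Proof.
apply: Wpar_mono => k /andP [k1 kn] /= ki; rewrite unfold_in /type_pair.
by apply/norP; split; apply/eqP; lia.
Qed.

Lemma Wpair_fix_lt w : w \in Wpair n i -> (forall k, (0 < k < i)%N -> ~~ descent w k) ->
  forall p : 'I_n.+1, (p < i)%N -> w p = p.
Proof.
move=> wK asc p pi; apply: (perm_fix_block (lo := 0) (hi := i.-1)) => //; try lia.
- by move=> q qi; have := Wpair_stable_lt wK (p := q); lia.
- by move=> k ki; apply: asc; lia.
Qed.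

Lemma Wpair_fix_ge w : w \in Wpair n i -> (forall k, (n.+1 - i < k <= n)%N -> ~~ descent w k) ->
  forall p : 'I_n.+1, (n.+1 - i <= p)%N -> w p = p.
Proof.
move=> wK asc p ip; apply: (perm_fix_block (lo := n.+1 - i) (hi := n)) => //.
- by move=> q qi; have := Wpair_stable_ge wK (p := q); have := ltn_ord (w q); lia.
- by have := ltn_ord p; lia.
Qed.

Lemma fix_lt_of_descents (g u : 'S_n.+1) : w0 * g \in Wpair n i -> u * g^-1 \in Wlt n i ->
  (forall k, (0 < k < i)%N -> descent u k) ->
  forall p : 'I_n.+1, (p < i)%N -> (u * w0) p = p.
Proof.
move=> gK ugL desc; apply: Wpair_fix_lt.
  have -> : u * w0 = (u * g^-1) * (w0 * g) ^ w0 by rewrite conjg_w0 !mulgA mulgw0K mulgKV.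
  apply: groupM; first exact: (subsetP Wlt_sub_Wpair _ ugL).
  exact: (Wpar_conj_w0 (@opp_stable_type_pair n i) gK).
move=> k ki; have hk : is_gen n k by rewrite /is_gen; lia.
by rewrite -descent_mulw0 // -mulgA w0K mulg1 desc.
Qed.

Lemma fix_ge_of_descents (g u : 'S_n.+1) : w0 * g \in Wpair n i -> u * g \in Wlt n i ->
  (forall k, (0 < k < i)%N -> descent u k) ->
  forall p : 'I_n.+1, (n.+1 - i <= p)%N -> (w0 * u) p = p.
Proof.
move=> gK ugL desc; apply: Wpair_fix_ge.
  have -> : w0 * u = (u * g) ^ w0 * ((w0 * g) ^ w0)^-1.
    by rewrite !conjg_w0 !mulgA w0K mul1g invMg w0V !mulgA mulgw0K mulgK.
  apply: groupM; rewrite ?groupV; apply: (Wpar_conj_w0 (@opp_stable_type_pair n i)) => //.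
  exact: (subsetP Wlt_sub_Wpair _ ugL).
move=> k kn; have hk' : is_gen n (n.+1 - k) by rewrite /is_gen; lia.
have e : u = w0 * (w0 * u) by rewrite mulgA w0K mul1g.
by have := desc (n.+1 - k) ltac:(lia); rewrite {1}e descent_w0mul // subKn //; lia.
Qed.

Lemma Wupto_of_residue_perms (g u1 u2 v : 'S_n.+1) :
  w0 * g \in Wpair n i -> u1 * g^-1 \in Wlt n i -> u2 * g \in Wlt n i ->
  u1^-1 * v \in Wlt n i -> v * u2 \in Wlt n i ->
  (forall k, (0 < k < i)%N -> descent u1 k && descent u2 k) ->
  v * w0 \in Wupto n i.
Proof.
move=> gK u1L u2L vL1 vL2 desc.
have fix1 := fix_lt_of_descents gK u1L (fun k ki => proj1 (andP (desc k ki))).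
have fix2 := fix_ge_of_descents gK u2L (fun k ki => proj2 (andP (desc k ki))).
apply: Wupto_of_fix => p /orP [pi|ip].
- have -> : v * w0 = (u1 * w0) * (u1^-1 * v) ^ w0.
    by rewrite conjg_w0 !mulgA mulgw0K mulgV mul1g.
  move: vL1; set r := u1^-1 * v; clearbody r => rL.
  rewrite permM fix1 // conjg_w0 !permM (Wlt_fix rL); first by rewrite !w0E rev_ordK.
  by rewrite w0E /=; lia.
- have -> : v * w0 = (v * u2) * (w0 * u2)^-1 by rewrite invMg w0V !mulgA mulgK.
  rewrite permM (Wlt_fix vL2); last lia.
  by rewrite -{1}(fix2 p ltac:(lia)) permK.
Qed.

Variables (C : Type) (delta : C -> C -> 'S_n.+1) (theta : C -> C).
Hypotheses (Hb : is_building delta) (Ht : thick delta) (Hcol : collineation delta theta).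

Lemma Wupto_opp_chamber c :
  w0 * delta c (theta c) \in Wpair n i -> exists b, delta b (theta b) * w0 \in Wupto n i.
Proof.
have [[th' thK th'K] dth] := Hcol.
have dth' x y : delta (th' x) (th' y) = delta x y by rewrite -dth !th'K.
move=> gK; have [b bc desc] := exists_descents_in_residue Hb Ht (gtn i) c (theta c) (th' c).
exists b; apply: (Wupto_of_residue_perms (u1 := delta b (theta c)) (u2 := delta b (th' c)) gK).
- exact: (residue_deltaL Hb (theta c) bc).
- have := residue_deltaL Hb (th' c) bc.
  by rewrite -[delta c (th' c)]dth th'K (deltaV Hb c (theta c)) invgK.
- by apply: (residue_deltaR Hb b); rewrite dth (deltaV Hb b c) groupV.
- have bc' : delta (th' b) (th' c) \in Wlt n i by rewrite dth'.
  have := residue_deltaL Hb b bc'.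
  by rewrite -[delta (th' b) b]dth th'K (deltaV Hb (th' c) b).
- by move=> k /andP [k0 ki]; apply: desc => //; rewrite /is_gen; lia.
Qed.

End Blocks.

Theorem lemma3p8 (n : nat) (C : Type) (delta : C -> C -> 'S_n.+1)
    (Hb : is_building delta) (Ht : thick delta)
    (theta : C -> C) (Hcol : collineation delta theta)
    (Hdom : domestic delta theta)
    (i : nat) (hi1 : (1 <= i)%N) (hi2 : (2 * i <= n.+1)%N)
    (A : C -> Prop) (HA : is_simplex delta (type_pair n i) A)
    (HAopp : opp_simplex delta A (img theta A)) :
  exists B : C -> Prop,
    is_simplex delta (type_upto n i) B /\ opp_simplex delta B (img theta B).
Proof.
case: HA => c [Ac Ares].
have gK : (w0 n * delta c (theta c) \in Wpair n i)%g.
  case: HAopp => /(_ c Ac) [_ [[d [Ad ->]] cd]] _.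
  have dc : delta (theta d) (theta c) \in Wpair n i.
    by rewrite Hcol.2 (deltaV Hb c d) groupV; apply/Ares.
  by have := residue_deltaR Hb c dc; rewrite cd w0V.
have [b bM] := Wupto_opp_chamber hi1 hi2 Hb Ht Hcol gK.
exists (fun x => delta b x \in Wupto n i); split.
  by exists b; rewrite (delta_refl Hb) group1.
apply: (opp_simplex_eqR (fun y => img_residue _ b y Hcol)).
exact: (opp_residues Hb (@opp_stable_type_upto n i) bM).
Qed.
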